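(* For every positive integer $d$, there exists a binary matrix $M$ such that $R_{bool}(M)=4d$ and $R_{\mathbb{R}}(M)=3d$.
   Context: $R_{\mathbb{R}}$ is the usual rank over the reals. For a binary $n\times m$ matrix $M$, the boolean rank $R_{bool}(M)$ is the least $k$ such that $M=UV$ with $U\in\{0,1\}^{n\times k}$, $V\in\{0,1\}^{k\times m}$, where the product is computed in the Boolean semiring ($1+1=1$), equivalently the minimum number of all-ones combinatorial rectangles (submatrices) needed to cover the $1$-entries of $M$. *)

From mathcomp Require Import all_boot all_order all_algebra.
From mathcomp Require Import Rstruct.
From Stdlib Require Rdefinitions.
Set Implicit Arguments. Unset Strict Implicit. Unset Printing Implicit Defensive.
Import GRing.Theory.
Local Open Scope ring_scope.

Definition bool_mulmx (n k m : nat) (U : 'M[bool]_(n, k)) (V : 'M[bool]_(k, m))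
  : 'M[bool]_(n, m) :=
  \matrix_(i < n, j < m) [exists l : 'I_k, U i l && V l j].

Definition bool_factorizable (n m : nat) (M : 'M[bool]_(n, m)) (k : nat) : Prop :=
  exists (U : 'M[bool]_(n, k)) (V : 'M[bool]_(k, m)), M = bool_mulmx U V.

Definition bool_rank_is (n m : nat) (M : 'M[bool]_(n, m)) (r : nat) : Prop :=
  bool_factorizable M r /\ forall k, bool_factorizable M k -> (r <= k)%N.

Definition real_of_bmx (n m : nat) (M : 'M[bool]_(n, m)) : 'M[Rdefinitions.R]_(n, m) :=
  map_mx (fun b : bool => (b : nat)%:R) M.

Definition real_rank (n m : nat) (M : 'M[bool]_(n, m)) : nat :=
  \rank (real_of_bmx M).

From mathcomp Require Import all_boot all_order all_algebra.
From mathcomp Require Import Rstruct.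
From mathcomp Require Import ring.
Set Implicit Arguments. Unset Strict Implicit. Unset Printing Implicit Defensive.
Import GRing.Theory.
Local Open Scope ring_scope.

(* The 4 x 4 matrix I + P, with P the cyclic shift, has Boolean rank 4: its
   diagonal is a fooling set, i.e. no two diagonal ones lie in a common
   all-ones rectangle.  Its rank over any field is only 3: the alternating sum
   of its rows vanishes, while deleting the last row and the first column
   leaves a unitriangular minor.  A Boolean factorization together with a
   fooling set of the same size, as well as the real rank, add up along
   block-diagonal sums, so d diagonal copies of I + P have Boolean rank 4d and
   real rank 3d. *)

Definition fooling_set n m (M : 'M[bool]_(n, m)) (r : nat) : Prop :=
  exists (f : 'I_r -> 'I_n) (g : 'I_r -> 'I_m),
    (forall a, M (f a) (g a)) /\
    (forall a b, a != b -> ~~ (M (f a) (g b) && M (f b) (g a))).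

Lemma fooling_set_leq_factorizable n m (M : 'M[bool]_(n, m)) r k :
  fooling_set M r -> bool_factorizable M k -> (r <= k)%N.
Proof.
move=> [f [g [Mfg fooled]]] [U [V defM]]; subst M.
have /fin_all_exists[h UVh] a : exists l, U (f a) l && V l (g a).
  by apply/existsP; have := Mfg a; rewrite mxE.
suff /leq_card : injective h by rewrite !card_ord.
move=> a b hab; apply: contraTeq (fooled a b) _.
case/andP: (UVh a) => Ua Va; case/andP: (UVh b) => Ub Vb.
rewrite !mxE; apply/andP; split; apply/existsP; exists (h a).
- by rewrite Ua hab.
- by rewrite Va andbT hab.
Qed.

Lemma bool_factorizable_width n m (M : 'M[bool]_(n, m)) : bool_factorizable M m.
Proof.
exists M, (\matrix_(i, j) (i == j)).
apply/matrixP => i j; rewrite [RHS]mxE; apply/idP/existsP => [Mij | [l]].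
- by exists j; rewrite mxE eqxx andbT.
- by rewrite mxE => /andP[Mil /eqP <-].
Qed.

Definition block_diag_bmx n1 m1 n2 m2 (A : 'M[bool]_(n1, m1)) (B : 'M[bool]_(n2, m2))
  : 'M[bool]_(n1 + n2, m1 + m2) :=
  block_mx A (const_mx false) (const_mx false) B.

Definition block_mxE := (block_mxEul, block_mxEur, block_mxEdl, block_mxEdr).

Lemma existsb_split_ord r1 r2 (P : pred 'I_(r1 + r2)) :
  [exists l, P l] = [exists l, P (lshift r2 l)] || [exists l, P (rshift r1 l)].
Proof.
apply/existsP/orP => [[l Pl] | [] /existsP[l Pl]]; last 2 first.
- by exists (lshift r2 l).
- by exists (rshift r1 l).
by case: (split_ordP l) Pl => {}l -> Pl; [left | right]; apply/existsP; exists l.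
Qed.

Lemma bool_mulmx_block_diag n1 k1 m1 n2 k2 m2
    (U1 : 'M_(n1, k1)) (V1 : 'M_(k1, m1)) (U2 : 'M_(n2, k2)) (V2 : 'M_(k2, m2)) :
  bool_mulmx (block_diag_bmx U1 U2) (block_diag_bmx V1 V2) =
  block_diag_bmx (bool_mulmx U1 V1) (bool_mulmx U2 V2).
Proof.
have existsF (T : finType) : [exists x : T, false] = false by apply/existsP => -[].
apply/matrixP => i j; rewrite mxE existsb_split_ord /block_diag_bmx.
case: (split_ordP i) => {}i ->; case: (split_ordP j) => {}j ->;
  rewrite !block_mxE ?mxE;
  under eq_existsb do rewrite !block_mxE ?mxE ?andbF;
  under [X in _ || X]eq_existsb do rewrite !block_mxE ?mxE ?andbF;
  by rewrite ?existsF ?orbF.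
Qed.

Lemma bool_factorizable_block_diag n1 m1 n2 m2
    (A : 'M_(n1, m1)) (B : 'M_(n2, m2)) k1 k2 :
  bool_factorizable A k1 -> bool_factorizable B k2 ->
  bool_factorizable (block_diag_bmx A B) (k1 + k2).
Proof.
move=> [U1 [V1 ->]] [U2 [V2 ->]].
by exists (block_diag_bmx U1 U2), (block_diag_bmx V1 V2); rewrite bool_mulmx_block_diag.
Qed.

Lemma fooling_set_block_diag n1 m1 n2 m2
    (A : 'M_(n1, m1)) (B : 'M_(n2, m2)) r1 r2 :
  fooling_set A r1 -> fooling_set B r2 -> fooling_set (block_diag_bmx A B) (r1 + r2).
Proof.
move=> [f1 [g1 [Af1g1 fooled1]]] [f2 [g2 [Bf2g2 fooled2]]].
exists (fun a => match split a with
                 | inl a1 => lshift n2 (f1 a1) | inr a2 => rshift n1 (f2 a2) end).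
exists (fun a => match split a with
                 | inl a1 => lshift m2 (g1 a1) | inr a2 => rshift m1 (g2 a2) end).
split => [a | a b].
- by case: (split_ordP a) => a1 _; rewrite /block_diag_bmx block_mxE.
- case: (split_ordP a) => a1 ->; case: (split_ordP b) => b1 ->;
    rewrite /block_diag_bmx eq_shift !block_mxE ?mxE ?andbF //.
  + exact: fooled1.
  + exact: fooled2.
Qed.

Lemma real_rank_block_diag n1 m1 n2 m2 (A : 'M_(n1, m1)) (B : 'M_(n2, m2)) :
  real_rank (block_diag_bmx A B) = (real_rank A + real_rank B)%N.
Proof.
by rewrite /real_rank /real_of_bmx map_block_mx !map_const_mx rank_diag_block_mx.
Qed.

Lemma mxrank_mxsub (F : fieldType) m n m' n' (f : 'I_m' -> 'I_m) (g : 'I_n' -> 'I_n)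
    (A : 'M[F]_(m, n)) :
  (\rank (mxsub f g A) <= \rank A)%N.
Proof.
rewrite -{1}[A]mul1mx mxsub_mul; apply: leq_trans (mxrankM_maxr _ _) _.
by rewrite -{1}[A]mulmx1 -mulmx_colsub mxrankM_maxl.
Qed.

Definition cycle4_mx : 'M[bool]_4 := \matrix_(i, j) ((j == i) || (j == ordS i)).

Lemma fooling_set_cycle4 : fooling_set cycle4_mx 4.
Proof.
exists id, id; split => [a | a b]; first by rewrite mxE eqxx.
by rewrite !mxE; case: a => [[|[|[|[|a]]]] ?]; case: b => [[|[|[|[|b]]]] ?].
Qed.

Lemma rank_cycle4 (F : fieldType) :
  \rank (map_mx (fun b : bool => (b : nat)%:R) cycle4_mx : 'M[F]_4) = 3%N.
Proof.
set A := map_mx _ _; apply/eqP; rewrite eqn_leq; apply/andP; split.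
- set v : 'rV[F]_4 := \row_(i < 4) (-1) ^+ i.
  have v_ker : (v <= kermx A)%MS.
    apply/sub_kermxP/rowP => j; rewrite !mxE !big_ord_recr big_ord0 /= !mxE.
    by case: j => [[|[|[|[|j]]]] ?] //=; ring.
  have v_neq0 : v != 0 by apply/eqP => /rowP/(_ ord0)/eqP; rewrite !mxE oner_eq0.
  by have := mxrankS v_ker; rewrite rank_rV v_neq0 mxrank_ker subn_gt0 -ltnS.
- set S : 'M[F]_3 := mxsub (widen_ord (leqnSn 3)) (lift ord0) A.
  have S_trig : is_trig_mx S.
    by apply/forallP => -[[|[|[|i]]] ?] //; apply/forallP => -[[|[|[|j]]] ?] //;
      rewrite ?mxE /= ?eqxx.
  have S_unit : S \in unitmx.
    by rewrite unitmxE det_trig // !big_ord_recr big_ord0 !mxE /= !mul1r unitr1.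
  by rewrite -[X in (X <= _)%N](mxrank_unit S_unit) mxrank_mxsub.
Qed.

Definition certified_ranks n m (M : 'M[bool]_(n, m)) (r q : nat) : Prop :=
  [/\ bool_factorizable M r, fooling_set M r & real_rank M = q].

Lemma certified_ranks_bool_rank n m (M : 'M[bool]_(n, m)) r q :
  certified_ranks M r q -> bool_rank_is M r /\ real_rank M = q.
Proof.
move=> [fact_r fool_r rankM]; do !split => //.
by move=> k; apply: fooling_set_leq_factorizable.
Qed.

Lemma certified_ranks_block_diag n1 m1 n2 m2
    (A : 'M_(n1, m1)) (B : 'M_(n2, m2)) r1 q1 r2 q2 :
  certified_ranks A r1 q1 -> certified_ranks B r2 q2 ->
  certified_ranks (block_diag_bmx A B) (r1 + r2) (q1 + q2).
Proof.
move=> [factA foolA rankA] [factB foolB rankB]; split.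
- exact: bool_factorizable_block_diag.
- exact: fooling_set_block_diag.
- by rewrite real_rank_block_diag rankA rankB.
Qed.

Lemma certified_ranks_empty : certified_ranks (const_mx false : 'M[bool]_(0, 0)) 0 0.
Proof.
split; last by apply/eqP; rewrite -leqn0 rank_leq_row.
- by exists (const_mx false), (const_mx false); apply/matrixP => -[].
- by exists id, id; split => -[].
Qed.

Lemma certified_ranks_cycle4 : certified_ranks cycle4_mx 4 3.
Proof.
split.
- exact: bool_factorizable_width.
- exact: fooling_set_cycle4.
- exact: (rank_cycle4 Rdefinitions.R).
Qed.

Lemma exists_certified_ranks d :
  exists n m (M : 'M[bool]_(n, m)), certified_ranks M (4 * d) (3 * d).
Proof.
elim: d => [|d [n [m [M certM]]]].
  by exists 0%N, 0%N, (const_mx false); exact: certified_ranks_empty.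
exists (4 + n)%N, (4 + m)%N, (block_diag_bmx cycle4_mx M).
by rewrite !mulnS; apply: certified_ranks_block_diag certified_ranks_cycle4 certM.
Qed.

Theorem theorem4 (d : nat) : (0 < d)%N ->
  exists (n m : nat) (M : 'M[bool]_(n, m)),
    bool_rank_is M (4 * d) /\ real_rank M = (3 * d)%N.
Proof.
(* The empty matrix covers d = 0. *)
move=> _; have [n [m [M certM]]] := exists_certified_ranks d.
by exists n, m, M; apply: certified_ranks_bool_rank.
Qed.
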